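(* Let $(a_n)_{n\ge 0}$ be the sequence defined by $a_0=5$, $a_1=13$ and $a_{n+1}=6a_n-a_{n-1}$ for $n\ge 1$, and let $(b_n)_{n\ge 0}$ be the sequence defined by $b_0=5$, $b_1=17$ and $b_{n+1}=6b_n-b_{n-1}$ for $n\ge 1$. Then $$\{z : \exists\, x,y\in\mathbb{N}^{+} \text{ with } x^2+y^2=z^2,\ y=x+7,\ z\in\mathbb{N}^{+},\ \gcd(x,y,z)=1\} \;=\; \{a_n : n\ge 1\}\cup\{b_n : n\ge 1\}.$$
   Context: $\mathbb{N}^{+}$ denotes the set of positive integers. A triple $(x,y,z)$ of positive integers with $x^2+y^2=z^2$ and $\gcd(x,y,z)=1$ is a primitive Pythagorean triple; the left-hand set is the set of largest entries $z$ of primitive Pythagorean triples whose two smaller entries differ by $7$. *)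

From mathcomp Require Import all_boot all_order all_algebra.
Set Implicit Arguments. Unset Strict Implicit. Unset Printing Implicit Defensive.
Import GRing.Theory Num.Theory.
Local Open Scope ring_scope.

Fixpoint lin_rec (c0 c1 : int) (n : nat) : int * int :=
  match n with
  | O => (c0, c1)
  | S m => let p := lin_rec c0 c1 m in (p.2, 6 * p.2 - p.1)
  end.

Definition seq_a (n : nat) : int := (lin_rec 5 13 n).1.
Definition seq_b (n : nat) : int := (lin_rec 5 17 n).1.

(* The substitution p = 3z - 4x - 14 turns x^2 + (x+7)^2 = z^2 into
   p^2 + z^2 + 196 = 6pz (the two differ by a factor 8), an equation invariant
   under the Vieta jump (p, q) |-> (q, 6q - p) that generates both sequences.
   Jumping down from a positive solution ends at (5, 13), (5, 17) or at a pair
   of multiples of 7; primitivity of the triple means exactly 7 ∤ z, which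
   rules out the last case.  Conversely, along both sequences the terms are
   1 mod 4 and prime to 7, so x = (3z - p - 14)/4 is a positive integer and the
   triple is primitive. *)
From mathcomp Require Import all_boot all_order all_algebra.
From mathcomp Require Import zify.
Import GRing.Theory Num.Theory.

Set Implicit Arguments.
Unset Strict Implicit.
Unset Printing Implicit Defensive.

Lemma primitive_tripleE (d x z : nat) : prime d -> odd d ->
  x ^ 2 + (x + d) ^ 2 = z ^ 2 -> (gcdn (gcdn x (x + d)) z == 1) = ~~ (d %| z).
Proof.
move=> d_pr d_odd eq_xz; rewrite gcdnDl.
have [d_x | d_Nx] := boolP (d %| x).
  by rewrite (gcdn_idPr d_x) -/(coprime d z) prime_coprime.
rewrite (eqP (_ : coprime x d)) ?gcd1n ?eqxx; last by rewrite coprime_sym prime_coprime.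
apply/esym/negP => d_z; case/negP: d_Nx.
have : d %| 2 * x ^ 2 + d * (2 * x + d) by rewrite (_ : _ + _ = z ^ 2) ?dvdn_exp //; lia.
rewrite (dvdn_addl _ (dvdn_mulr _ (dvdnn d))) Euclid_dvdM // Euclid_dvdX // andbT.
by rewrite dvdn_prime2 // => /orP[/eqP d2|] //; rewrite d2 in d_odd.
Qed.

Local Open Scope ring_scope.

Lemma triple_pairE (x q : int) :
  (x ^+ 2 + (x + 7) ^+ 2 == q ^+ 2) =
  ((3 * q - 4 * x - 14) ^+ 2 + q ^+ 2 + 196 == 6 * (3 * q - 4 * x - 14) * q).
Proof. by apply/eqP/eqP; lia. Qed.

Lemma dvd7_pair (p q : int) :
  p ^+ 2 + q ^+ 2 + 196 = 6 * p * q -> (7 %| p)%Z -> (7 %| q)%Z.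
Proof.
move=> pq /dvdzP[k def_p].
suff : (7 %| q ^+ 2)%Z by rewrite !dvdzE abszX Euclid_dvdX // andbT.
by apply/dvdzP; exists (6 * k * q - 7 * k ^+ 2 - 28); lia.
Qed.

Lemma small_pairs (p q : int) : 0 < p <= q -> p ^+ 2 + q ^+ 2 + 196 = 6 * p * q ->
  p <= 7 -> p = 5 /\ (q = 13 \/ q = 17) \/ p = 7.
Proof.
move=> p_q pq p_le7.
have p_ge5 : 5 <= p.
  by have : 0 <= (q - 3 * p) ^+ 2 := sqr_ge0 _; nia.
have [p5 | [p6 | p7]] : p = 5 \/ p = 6 \/ p = 7 by lia.
- left; split=> //; have /eqP : (q - 13) * (q - 17) = 0 by lia.
  by rewrite mulf_eq0 !subr_eq0 => /orP[] /eqP; auto.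
- (* (q - 18)^2 = 92 is not a square *)
  have [q_mid | q_out] := boolP (9 <= q <= 27); first nia.
  have q_far : 100 <= (q - 18) ^+ 2 by nia.
  nia.
- by right.
Qed.

Lemma lin_recS (c0 c1 : int) n :
  lin_rec c0 c1 n.+1 = ((lin_rec c0 c1 n).2, 6 * (lin_rec c0 c1 n).2 - (lin_rec c0 c1 n).1).
Proof. by []. Qed.

Lemma lin_rec_ind (I : int -> int -> Prop) (c0 c1 : int) :
  I c0 c1 -> (forall p q, I p q -> I q (6 * q - p)) ->
  forall n, I (lin_rec c0 c1 n).1 (lin_rec c0 c1 n).2.
Proof. by move=> I0 IS; elim=> // n IHn; rewrite lin_recS; apply: IS. Qed.

Definition consecutive_terms (p q : int) : Prop :=
  exists n, lin_rec 5 13 n = (p, q) \/ lin_rec 5 17 n = (p, q).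

Lemma consecutive_termsS (p q : int) :
  consecutive_terms p q -> consecutive_terms q (6 * q - p).
Proof. by case=> n [] e; exists n.+1; [left | right]; rewrite lin_recS e. Qed.

Lemma consecutive_termsP (z : int) :
  (exists p, consecutive_terms p z) <->
  (exists n : nat, (1 <= n)%N /\ (z = seq_a n \/ z = seq_b n)).
Proof.
split=> [[p [n [] e]] | [[|n] [// _ [] ->]]].
- by exists n.+1; split=> //; left; rewrite /seq_a lin_recS e.
- by exists n.+1; split=> //; right; rewrite /seq_b lin_recS e.
- by exists (lin_rec 5 13 n).1, n; left; rewrite /seq_a lin_recS; case: lin_rec.
- by exists (lin_rec 5 17 n).1, n; right; rewrite /seq_b lin_recS; case: lin_rec.
Qed.

Lemma consecutive_terms_descent (p q : int) : 0 < p <= q ->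
  p ^+ 2 + q ^+ 2 + 196 = 6 * p * q -> ~~ (7 %| q)%Z -> consecutive_terms p q.
Proof.
have [n] := ubnP `|q|%N; elim: n => // n IHn in p q *.
move=> q_lt p_q pq q_N7.
have p_N7 : ~~ (7 %| p)%Z by apply: contra q_N7; apply: dvd7_pair.
have [p_le7 | p_gt7] := lerP p 7.
  case: (small_pairs p_q pq p_le7) => [[-> [] ->] | p7]; first by exists 0%N; left.
    by exists 0%N; right.
  by rewrite p7 in p_N7.
have [r_p p_lt_q] : 0 < 6 * p - q <= p /\ p < q by nia.
have -> : q = 6 * p - (6 * p - q) by lia.
by apply/consecutive_termsS/IHn => //; lia.
Qed.

Lemma consecutive_terms_props (p q : int) : consecutive_terms p q ->
  [/\ 0 < p < q, 13 <= q, p ^+ 2 + q ^+ 2 + 196 = 6 * p * q,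
      (4 %| p - 1)%Z && (4 %| q - 1)%Z & ~~ (7 %| q)%Z].
Proof.
(* mod 7 the recurrence reads (p, q) |-> (q, - p - q) *)
pose I (p q : int) := [/\ 0 < p < q, 13 <= q, p ^+ 2 + q ^+ 2 + 196 = 6 * p * q,
  (4 %| p - 1)%Z && (4 %| q - 1)%Z & [&& ~~ (7 %| p)%Z, ~~ (7 %| q)%Z & ~~ (7 %| p + q)%Z]].
have IS p' q' : I p' q' -> I q' (6 * q' - p') by case; split; lia.
have I13 : I 5 13 by split; lia.
have I17 : I 5 17 by split; lia.
case=> n [] e; [have := lin_rec_ind I13 IS n | have := lin_rec_ind I17 IS n].
  by rewrite e => -[] /= *; split; lia.
by rewrite e => -[] /= *; split; lia.
Qed.

Lemma consecutive_terms_of_triple (x : nat) (z : int) : 0 < z ->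
  (x ^ 2 + (x + 7) ^ 2)%:Z = z ^+ 2 -> gcdn (gcdn x (x + 7)) `|z| = 1%N ->
  consecutive_terms (3 * z - 4 * x%:Z - 14) z.
Proof.
move=> z_pos eq_xz gcd1.
have eq_xz_abs : (x ^ 2 + (x + 7) ^ 2 = `|z| ^ 2)%N by rewrite -abszX -eq_xz.
have z_N7 : ~~ (7 %| z)%Z.
  by rewrite dvdzE -(@primitive_tripleE 7 _ _ isT isT eq_xz_abs) gcd1.
have : x%:Z ^+ 2 + (x%:Z + 7) ^+ 2 == z ^+ 2 by apply/eqP; lia.
rewrite triple_pairE => /eqP pz.
by apply: consecutive_terms_descent => //; nia.
Qed.

Lemma triple_of_consecutive_terms (p z : int) : consecutive_terms p z ->
  exists x : nat, [/\ (0 < x)%N, 0 < z, (x ^ 2 + (x + 7) ^ 2)%:Z = z ^+ 2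
                    & gcdn (gcdn x (x + 7)) `|z| = 1%N].
Proof.
case/consecutive_terms_props => p_z z_ge13 pz /andP[p1 z1] z_N7.
have /dvdzP[k def_k] : (4 %| 3 * z - p - 14)%Z by lia.
have [x def_x] : exists x : nat, k = x by exists `|k|%N; lia.
have /eqP eq_xz : x%:Z ^+ 2 + (x%:Z + 7) ^+ 2 == z ^+ 2.
  by rewrite triple_pairE (_ : 3 * z - 4 * x%:Z - 14 = p) ?pz //; lia.
have eq_xz_abs : (x ^ 2 + (x + 7) ^ 2 = `|z| ^ 2)%N by rewrite -abszX -eq_xz; lia.
exists x; split; [lia | lia | lia |].
by apply/eqP; rewrite (@primitive_tripleE 7 _ _ isT isT eq_xz_abs).
Qed.

Theorem mainTheorem1 :
  forall z : int,
    (exists x y : nat, (0 < x)%N /\ (0 < y)%N /\ (0 < z) /\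
        (x ^ 2 + y ^ 2)%:Z = z ^+ 2 /\ y = (x + 7)%N /\
        gcdn (gcdn x y) `|z|%N = 1%N)
    <->
    (exists n : nat, (1 <= n)%N /\ (z = seq_a n \/ z = seq_b n)).
Proof.
move=> z; rewrite -consecutive_termsP; split.
  move=> [x [y [_ [_ [z_pos [eq_xz [def_y gcd1]]]]]]]; subst y.
  by exists (3 * z - 4 * x%:Z - 14); apply: consecutive_terms_of_triple.
case=> p /triple_of_consecutive_terms [x [x_pos z_pos eq_xz gcd1]].
by exists x, (x + 7)%N; rewrite addn_gt0 orbT.
Qed.
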